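(* For every iteration index $j\ge1$ generated during the $l$-th cycle of RPF-SFISTA, $\|\xi_j-z_{l-1}\|^2\le C_{\bar\mu}(z_{l-1})$.
   Context: Setup. Let $f:\mathbb R^n\to\mathbb R$ be convex and differentiable with $\|\nabla f(z')-\nabla f(z)\|\le\bar L\|z'-z\|$ for all $z,z'\in\mathbb R^n$ (some $\bar L\ge0$). Let $h:\mathbb R^n\to(-\infty,\infty]$ be proper, lower semicontinuous and convex with domain $\mathcal H$. Let $\phi:=f+h$ be $\bar\mu$-strongly convex for some $\bar\mu>0$, with (unique) minimizer $z^*$. Write $\ell_f(u;x):=f(x)+\langle\nabla f(x),u-x\rangle$. Define $C_{\bar\mu}(z):=\frac{8}{\bar\mu}[\phi(z)-\phi(z^* )]$. RPF-SFISTA. Parameters $\chi\in(0,1)$, $\beta>1$; inputs $\mu_0>0$, $\bar M_0>0$, $z_0\in\mathcal H$, $\hat\epsilon>0$. The method runs in cycles $l=1,2,\dots$. At the start of cycle $l$: choose $\underline M_l\in[\max\{\bar M_{l-1}/4,\bar M_0\},\bar M_{l-1}]$ (so $\underline M_1=\bar M_0$), set $\mu:=\mu_{l-1}$, $x_0:=z_{l-1}$, $\xi_0:=y_0:=x_0$, $A_0:=0$, $\tau_0:=1$, $L_0:=\underline M_l$. Then for $j=1,2,\dots$: (i) set $L_j:=L_{j-1}$; (ii) compute $a_{j-1}=\frac{\tau_{j-1}+\sqrt{\tau_{j-1}^2+4\tau_{j-1}A_{j-1}L_j}}{2L_j}$, $\tilde x_{j-1}=\frac{A_{j-1}y_{j-1}+a_{j-1}x_{j-1}}{A_{j-1}+a_{j-1}}$,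 $y_j=\arg\min_{u}\{\ell_f(u;\tilde x_{j-1})+h(u)+\frac{L_j}{2}\|u-\tilde x_{j-1}\|^2\}$; if $f(y_j)\le\ell_f(y_j;\tilde x_{j-1})+\frac{(1-\chi)L_j}{4}\|y_j-\tilde x_{j-1}\|^2$ go to (iii), otherwise replace $L_j$ by $\beta L_j$ and repeat (ii); (iii) set $\xi_j:=y_j$ if $\phi(y_j)\le\phi(\xi_{j-1})$ and $\xi_j:=\xi_{j-1}$ otherwise; $A_j:=A_{j-1}+a_{j-1}$; $\tau_j:=\tau_{j-1}+a_{j-1}\mu/2$; $s_j:=L_j(\tilde x_{j-1}-y_j)$; $x_j:=\tau_j^{-1}[\mu a_{j-1}y_j/2+\tau_{j-1}x_{j-1}-a_{j-1}s_j]$; $v_j:=\nabla f(y_j)-\nabla f(\tilde x_{j-1})+s_j$; (iv) if $\|\xi_j-x_0\|^2<\chi A_jL_j\|y_j-\tilde x_{j-1}\|^2$, the cycle ends with a restart: set $z_l:=\xi_j$, $\bar M_l:=L_j$, $\mu_l:=\mu/2$ and start cycle $l+1$; (v) otherwise, if $\|v_j\|\le\hat\epsilon$, stop and output $(y,v,\xi,L):=(y_j,v_j,\xi_j,L_j)$; else go to iteration $j+1$. *)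

From HB Require Import structures.
From mathcomp Require Import all_boot all_order all_algebra.
From mathcomp Require Import all_classical all_reals all_analysis.
Set Implicit Arguments. Unset Strict Implicit. Unset Printing Implicit Defensive.
Import Order.TTheory GRing.Theory Num.Theory.
Import numFieldNormedType.Exports.
Local Open Scope ring_scope.

Section Defs.
Variables (R : realType) (n : nat).
Local Notation vec := 'rV[R]_n.

Definition dot (u v : vec) : R := \sum_(i < n) u ord0 i * v ord0 i.
Definition norm2 (u : vec) : R := dot u u.
Definition enorm (u : vec) : R := Num.sqrt (norm2 u).

Definition is_gradient (f : vec -> R) (gradf : vec -> vec) : Prop :=
  forall x, differentiable f x /\ forall u, 'd f x u = dot (gradf x) u.

Definition convex_real (f : vec -> R) : Prop :=
  forall x y (t : R), 0 < t < 1 ->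
    f (t *: x + (1 - t) *: y) <= t * f x + (1 - t) * f y.

Definition convex_ext (h : vec -> \bar R) : Prop :=
  forall (x y : vec) (t : R), 0 < t < 1 ->
    (h (t *: x + (1 - t) *: y)%R <= t%:E * h x + (1 - t)%:E * h y)%E.

Definition proper_ext (h : vec -> \bar R) : Prop :=
  (forall x, h x != -oo%E) /\ exists x, (h x < +oo)%E.

Definition dom (h : vec -> \bar R) : set vec := [set x | (h x < +oo)%E].

Definition strongly_convex_ext (mu : R) (g : vec -> \bar R) : Prop :=
  forall (x y : vec) (t : R), 0 < t < 1 ->
    (g (t *: x + (1 - t) *: y)%R <=
       t%:E * g x + (1 - t)%:E * g y - (mu / 2 * t * (1 - t) * norm2 (x - y))%:E)%E.

Definition phi_of (f : vec -> R) (h : vec -> \bar R) (z : vec) : \bar R :=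
  ((f z)%:E + h z)%E.

Definition Cmu (f : vec -> R) (h : vec -> \bar R) (mubar : R) (zs z : vec) : \bar R :=
  ((8 / mubar)%:E * (phi_of f h z - phi_of f h zs))%E.

Definition lin_f (f : vec -> R) (gradf : vec -> vec) (u x : vec) : R :=
  f x + dot (gradf x) (u - x).

(* a_{j-1} as a function of the trial L *)
Definition acoef (tau A Lv : R) : R :=
  (tau + Num.sqrt (tau ^+ 2 + 4 * tau * A * Lv)) / (2 * Lv).

(* tilde x_{j-1} as a function of the trial L *)
Definition xtil (tau A Lv : R) (yprev xprev : vec) : vec :=
  (A + acoef tau A Lv)^-1 *: (A *: yprev + acoef tau A Lv *: xprev).

Definition is_prox_min (f : vec -> R) (gradf : vec -> vec) (h : vec -> \bar R)
  (Lv : R) (xt y : vec) : Prop :=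
  forall u,
    ((lin_f f gradf y xt + Lv / 2 * norm2 (y - xt))%:E + h y <=
     (lin_f f gradf u xt + Lv / 2 * norm2 (u - xt))%:E + h u)%E.

Definition descent_ok (f : vec -> R) (gradf : vec -> vec) (chi Lv : R) (xt y : vec) : Prop :=
  f y <= lin_f f gradf y xt + (1 - chi) * Lv / 4 * norm2 (y - xt).

Definition rpf_step (f : vec -> R) (gradf : vec -> vec) (h : vec -> \bar R)
  (chi beta mu : R)
  (x y xi xt s v : nat -> vec) (A tau L a : nat -> R) (j : nat) : Prop :=
  let tp := tau j.-1 in let Ap := A j.-1 in let Lp := L j.-1 in
  (exists k : nat,
     (forall i : nat, (i < k)%N ->
        forall yy, is_prox_min f gradf h (beta ^+ i * Lp)
                     (xtil tp Ap (beta ^+ i * Lp) (y j.-1) (x j.-1)) yy ->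
        ~ descent_ok f gradf chi (beta ^+ i * Lp)
                     (xtil tp Ap (beta ^+ i * Lp) (y j.-1) (x j.-1)) yy) /\
     L j = beta ^+ k * Lp /\
     a j.-1 = acoef tp Ap (L j) /\
     xt j.-1 = xtil tp Ap (L j) (y j.-1) (x j.-1) /\
     is_prox_min f gradf h (L j) (xt j.-1) (y j) /\
     descent_ok f gradf chi (L j) (xt j.-1) (y j)) /\
  xi j = (if (phi_of f h (y j) <= phi_of f h (xi j.-1))%E then y j else xi j.-1) /\
  A j = Ap + a j.-1 /\
  tau j = tp + a j.-1 * mu / 2 /\
  s j = L j *: (xt j.-1 - y j) /\
  x j = (tau j)^-1 *: ((mu * a j.-1 / 2) *: y j + tp *: x j.-1 - a j.-1 *: s j) /\
  v j = gradf (y j) - gradf (xt j.-1) + s j.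

Definition rpf_restart (chi : R) (x0 : vec)
  (y xi xt : nat -> vec) (A L : nat -> R) (j : nat) : Prop :=
  norm2 (xi j - x0) < chi * A j * L j * norm2 (y j - xt j.-1).

Definition rpf_stop (eps : R) (v : nat -> vec) (j : nat) : Prop :=
  enorm (v j) <= eps.

(* A cycle started at x0 with parameter mu and L_0 = Lunder, in which the
   iterations 1, ..., J have been generated (so iterations 1..J-1 neither
   restarted nor stopped). *)
Definition rpf_cycle (f : vec -> R) (gradf : vec -> vec) (h : vec -> \bar R)
  (chi beta eps mu : R) (x0 : vec) (Lunder : R) (J : nat)
  (x y xi xt s v : nat -> vec) (A tau L a : nat -> R) : Prop :=
  [/\ x 0 = x0, xi 0 = x0, y 0 = x0 & A 0 = 0] /\ tau 0 = 1 /\ L 0 = Lunder /\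
  (forall j, (1 <= j <= J)%N -> rpf_step f gradf h chi beta mu x y xi xt s v A tau L a j) /\
  (forall j, (1 <= j < J)%N ->
     ~ rpf_restart chi x0 y xi xt A L j /\ ~ rpf_stop eps v j).

Definition Munder_ok (Mprev M0 Mu : R) : Prop :=
  Num.max (Mprev / 4) M0 <= Mu <= Mprev.

(* The outer loop has reached the start of cycle l: z l', Mbar l', mu l'
   (l' < l) are the values produced by cycles 1..l-1, each ending in a restart. *)
Definition rpf_reaches (f : vec -> R) (gradf : vec -> vec) (h : vec -> \bar R)
  (chi beta eps mu0 M0 : R) (z0 : vec) (l : nat)
  (z : nat -> vec) (Mb mu : nat -> R) : Prop :=
  z 0 = z0 /\ Mb 0 = M0 /\ mu 0 = mu0 /\
  forall l', (1 <= l' < l)%N ->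
    exists (Lunder : R) (J : nat) (x y xi xt s v : nat -> vec) (A tau L a : nat -> R),
      [/\ Munder_ok (Mb l'.-1) M0 Lunder, (1 <= J)%N,
          rpf_cycle f gradf h chi beta eps (mu l'.-1) (z l'.-1) Lunder J
                    x y xi xt s v A tau L a,
          rpf_restart chi (z l'.-1) y xi xt A L J &
          [/\ z l' = xi J, Mb l' = L J & mu l' = mu l'.-1 / 2]].

End Defs.

From HB Require Import structures.
From mathcomp Require Import all_boot all_order all_algebra.
From mathcomp Require Import all_classical all_reals all_analysis.
From mathcomp Require Import lra.
Set Implicit Arguments. Unset Strict Implicit. Unset Printing Implicit Defensive.
Import Order.TTheory GRing.Theory Num.Theory.
Import numFieldNormedType.Exports.
Local Open Scope ring_scope.

(* The best iterate xi_j never increases phi, so phi(xi_j) <= phi(z_{l-1}).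
   Strong convexity at the midpoint m of xi_j and z_{l-1}, together with the
   minimality of z^*, then gives
   phi(z^* ) <= phi(m) <= phi(z_{l-1}) - mubar/8 ||xi_j - z_{l-1}||^2. *)

Section StrongConvexity.
Variables (R : realType) (n : nat).
Local Notation vec := 'rV[R]_n.

Lemma fin_of_le_fin (e : \bar R) (r : R) :
  e != -oo%E -> (e <= r%:E)%E -> exists q, e = q%:E.
Proof. by case: e => [q| |] // _ _; exists q. Qed.

Lemma strongly_convex_norm2_le (g : vec -> \bar R) (mu : R) (zs x y : vec) :
  0 < mu -> strongly_convex_ext mu g ->
  (forall w, g w != -oo%E) -> (forall w, (g zs <= g w)%E) -> (g zs < +oo)%E ->
  (g x <= g y)%E ->
  ((norm2 (x - y))%:E <= (8 / mu)%:E * (g y - g zs))%E.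
Proof.
move=> mu_gt0 gconv gN gmin gzs_fin gxy.
have [r0 E0] : exists r0, g zs = r0%:E.
  by move: (gN zs) gzs_fin; case: (g zs) => [r0| |] // _ _; exists r0.
have gy_cases : (exists r, g y = r%:E) \/ g y = +oo%E.
  by move: (gN y); case: (g y) => [r| |] // _; [left; exists r | right].
case: gy_cases => [[r Ey] | Ey]; last first.
  by rewrite E0 Ey addye // mulry gtr0_sg ?divr_gt0 // mul1e leey.
rewrite Ey in gxy.
have [r1 E1] := fin_of_le_fin (gN x) gxy.
rewrite E1 lee_fin in gxy.
have half : 0 < (1 / 2 : R) < 1 by apply/andP; split; lra.
set m := (1 / 2) *: x + (1 - 1 / 2) *: y.
have gm : (g m <= (1 / 2 * r1 + (1 - 1 / 2) * r
                   - mu / 2 * (1 / 2) * (1 - 1 / 2) * norm2 (x - y))%:E)%E.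
  by rewrite (le_trans (gconv x y _ half)) // E1 Ey EFinB EFinD !EFinM.
have [rm Em] := fin_of_le_fin (gN m) gm.
have := gmin m.
rewrite Em E0 lee_fin => r0_le_rm.
rewrite Em lee_fin in gm.
rewrite Ey -EFinB -EFinM lee_fin.
set N := norm2 (x - y) in gm *.
have key : mu * N <= 8 * (r - r0) by clear -gm gxy r0_le_rm; lra.
by rewrite mulrAC ler_pdivlMr // mulrC.
Qed.

End StrongConvexity.

Section RPFCycle.
Variables (R : realType) (n : nat).
Local Notation vec := 'rV[R]_n.
Variables (f : vec -> R) (gradf : vec -> vec) (h : vec -> \bar R).

Lemma phi_of_neq_ninfty : proper_ext h -> forall w, phi_of f h w != -oo%E.
Proof. by move=> [hN _] w; rewrite /phi_of; have := hN w; case: (h w). Qed.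

Lemma phi_of_lt_pinfty w : (h w < +oo)%E -> (phi_of f h w < +oo)%E.
Proof. by rewrite /phi_of; case: (h w) => [r| |] //= _; rewrite ?ltry. Qed.

Lemma rpf_cycle_phi_xi_le chi beta eps mu x0 Lunder J
    (x y xi xt s v : nat -> vec) (A tau L a : nat -> R) j :
  rpf_cycle f gradf h chi beta eps mu x0 Lunder J x y xi xt s v A tau L a ->
  (j <= J)%N -> (phi_of f h (xi j) <= phi_of f h x0)%E.
Proof.
move=> [[_ xi0 _ _] [_ [_ [step _]]]].
elim: j => [|j IH] le_jJ; first by rewrite xi0.
have [_ [-> _]] := step j.+1 le_jJ.
have := IH (ltnW le_jJ).
by case: ifP => // phi_le phi_xi; apply: le_trans phi_le phi_xi.
Qed.

End RPFCycle.

Theorem lemmaA1 (R : realType) (n : nat)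
  (f : 'rV[R]_n -> R) (gradf : 'rV[R]_n -> 'rV[R]_n) (Lbar : R)
  (h : 'rV[R]_n -> \bar R) (mubar : R) (zs : 'rV[R]_n)
  (chi beta mu0 M0 eps : R) (z0 : 'rV[R]_n)
  (* standing assumptions on f, h, phi *)
  (hfconv : convex_real f) (hgrad : is_gradient f gradf) (hLbar : 0 <= Lbar)
  (hLip : forall z z', enorm (gradf z' - gradf z) <= Lbar * enorm (z' - z))
  (hproper : proper_ext h) (hlsc : lower_semicontinuous h) (hhconv : convex_ext h)
  (hmubar : 0 < mubar) (hstrong : strongly_convex_ext mubar (phi_of f h))
  (hzs : forall z, (phi_of f h zs <= phi_of f h z)%E)
  (* parameters and inputs of RPF-SFISTA *)
  (hchi : 0 < chi < 1) (hbeta : 1 < beta) (hmu0 : 0 < mu0) (hM0 : 0 < M0)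
  (hz0 : dom h z0) (heps : 0 < eps)
  (* the algorithm has reached cycle l *)
  (l : nat) (hl : (1 <= l)%N)
  (z : nat -> 'rV[R]_n) (Mb mu : nat -> R)
  (hreach : rpf_reaches f gradf h chi beta eps mu0 M0 z0 l z Mb mu)
  (* cycle l, in which iteration J >= 1 has been generated *)
  (Lunder : R) (hLunder : Munder_ok (Mb l.-1) M0 Lunder)
  (J : nat) (hJ : (1 <= J)%N)
  (x y xi xt s v : nat -> 'rV[R]_n) (A tau L a : nat -> R)
  (hcycle : rpf_cycle f gradf h chi beta eps (mu l.-1) (z l.-1) Lunder J
              x y xi xt s v A tau L a) :
  ((norm2 (xi J - z l.-1))%:E <= Cmu f h mubar zs (z l.-1))%E.
Proof.
rewrite /Cmu; apply: (strongly_convex_norm2_le hmubar hstrong _ hzs).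
- exact: phi_of_neq_ninfty.
- exact: le_lt_trans (hzs z0) (phi_of_lt_pinfty f hz0).
- exact: rpf_cycle_phi_xi_le hcycle (leqnn J).
Qed.
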